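(* Let $G=(L,R,E)$ be a bipartite graph, $f:2^E\to\mathbb{R}_{\ge0}$ non-negative, monotonically non-decreasing and submodular, $p\in(0,1)$, and run $\mathrm{SIMULATE2}$ (see context) to obtain $M,N,S$ and $w$. For any $t>0$, with $\alpha=\frac{p}{1-p}$ and $\theta=\frac{t+\alpha}{\alpha}$, $$\mathbb{E}[f(S)]\ge\Big(\frac1\theta-\frac{1}{t\,p^2}\Big)\mathbb{E}[w(S)].$$
   Context: $f_M(e)=f(M\cup\{e\})-f(M)$. $\mathrm{SIMULATE2}$: start with $M=N=\emptyset$ and a working copy of $E$. While there is an edge $e^*=(\ell^*,r^* )$ in the working edge set such that $M\cup\{e^*\}$ is a matching, take such an edge maximizing $f_M(e^* )$ (fixed tie-breaking); let $M_{e^*}$ be the current $M$; flip an independent coin with head probability $p$; on heads add $e^*$ to $M$, otherwise to $N$; then remove all edges incident to $\ell^*$ from the working edge set. Finally let $S$ be the set of edges $(\ell,r)\in N$ that are the only edge of $N$ incident to $r$. Define $w(e)=f_{M_e}(e)$ for every edge $e$ selected during the loop and $w(e)=0$ for all other edges; $w(T)=\sum_{e\in T}w(e)$. *)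

From mathcomp Require Import all_boot all_order all_algebra.
Set Implicit Arguments. Unset Strict Implicit. Unset Printing Implicit Defensive.
Import Order.TTheory GRing.Theory Num.Theory.
Local Open Scope ring_scope.

Section Simulate2.
Variables (R : realFieldType) (V1 V2 : finType).
(* f : 2^E -> R, represented on all edge sets of the complete bipartite type *)
Variable f : {set V1 * V2} -> R.
(* fixed tie-breaking: an injective rank on edges (smaller rank wins) *)
Variable rank : V1 * V2 -> nat.

Definition is_matching (A : {set V1 * V2}) : bool :=
  [forall e1 in A, forall e2 in A,
     (e1 != e2) ==> ((e1.1 != e2.1) && (e1.2 != e2.2))].

Definition gain (M : {set V1 * V2}) (e : V1 * V2) : R := f (e |: M) - f M.

(* state of the loop: (M, N, working edge set, w) *)
Definition state := ({set V1 * V2} * {set V1 * V2} * {set V1 * V2} * {ffun V1 * V2 -> R})%type.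

Definition candidates (st : state) : {set V1 * V2} :=
  let: (M, _, W, _) := st in [set e in W | is_matching (e |: M)].

Definition is_choice (st : state) (e : V1 * V2) : bool :=
  let: (M, _, _, _) := st in
  (e \in candidates st) &&
  [forall e' in candidates st,
     (gain M e' < gain M e) || ((gain M e' == gain M e) && (rank e <= rank e')%N)].

(* one iteration of the while loop; the coin flipped when the left vertex l
   is processed is c l (each left vertex is processed at most once) *)
Definition step (c : {ffun V1 -> bool}) (st : state) : state :=
  let: (M, N, W, w) := st in
  match [pick e | is_choice st e] with
  | None => st
  | Some e =>
      let g := gain M e in
      let w' := [ffun x => if x == e then g else w x] in
      let W' := [set x in W | x.1 != e.1] in
      if c e.1 then (e |: M, N, W', w') else (M, e |: N, W', w')
  end.

Definition run (E : {set V1 * V2}) (c : {ffun V1 -> bool}) : state :=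
  iter #|E| (step c) (set0, set0, E, [ffun => 0]).

Definition sim_M E c : {set V1 * V2} := let: (M, _, _, _) := run E c in M.
Definition sim_N E c : {set V1 * V2} := let: (_, N, _, _) := run E c in N.
Definition sim_w E c : {ffun V1 * V2 -> R} := let: (_, _, _, w) := run E c in w.
Definition sim_S E c : {set V1 * V2} :=
  let N := sim_N E c in
  [set e in N | [forall e' in N, (e'.2 == e.2) ==> (e' == e)]].

End Simulate2.

Definition coin_prob (R : realFieldType) (V1 : finType) (p : R) (c : {ffun V1 -> bool}) : R :=
  \prod_(l : V1) (if c l then p else 1 - p).

Definition Ex (R : realFieldType) (V1 : finType) (p : R) (X : {ffun V1 -> bool} -> R) : R :=
  \sum_(c : {ffun V1 -> bool}) coin_prob p c * X c.

(* Write q = 1 - p.  Alongside the state (M, N, W, w) of SIMULATE2 we carry a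
   ghost weight h: when e is processed, h e is its gain with respect to M :|: N.
   By submodularity the ghost weights of any set X of processed edges add up to
   at most f X - f set0.  For p >= q the potential

     Phi = sum_(x in S(N)) (h x if x.2 is matched by M, p * h x otherwise)
           - p q (f (M :|: N) - f M)
           - q^2 sum_(r unmatched by M) max_(x in N, x.2 = r) w x
           - (p - q) w(S(N))

   does not decrease in expectation at any step: each step flips the coin of a
   fresh left vertex, and the gains of the four terms are compared with
   f_M(e) >= f_(M :|: N)(e) and the greedy choice of e.  Phi starts at 0 and
   ends below f(S) - (p - q) w(S), so E f(S) >= (2p - 1) E w(S).  Finally the
   coefficient 1/theta - 1/(t p^2) is at most 0 when p <= q and at most 2p - 1
   when p >= q. *)

From mathcomp Require Import all_boot all_order all_algebra.
From mathcomp Require Import ring lra.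
Set Implicit Arguments. Unset Strict Implicit. Unset Printing Implicit Defensive.
Import Order.TTheory GRing.Theory Num.Theory.
Local Open Scope ring_scope.

Section CoinExpectation.
Variables (R : realFieldType) (V : finType) (p : R).
Hypotheses (p_ge0 : 0 <= p) (p_le1 : p <= 1).
Implicit Types (X Y : {ffun V -> bool} -> R) (c : {ffun V -> bool}) (l : V).

Lemma coin_prob_ge0 c : 0 <= coin_prob p c.
Proof. by apply: prodr_ge0 => l _; case: (c l); rewrite ?subr_ge0. Qed.

Lemma sum_coin_prob : \sum_(c : {ffun V -> bool}) coin_prob p c = 1.
Proof.
rewrite /coin_prob -(bigA_distr_bigA (fun l (b : bool) => if b then p else 1 - p)) /=.
by apply: big1 => l _; rewrite big_bool /= addrC subrK.
Qed.

Lemma Ex_cst k : Ex p (fun _ : {ffun V -> bool} => k) = k.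
Proof. by rewrite /Ex -mulr_suml sum_coin_prob mul1r. Qed.

Lemma eq_Ex X Y : X =1 Y -> Ex p X = Ex p Y.
Proof. by move=> eqXY; apply: eq_bigr => c _; rewrite eqXY. Qed.

Lemma ler_Ex X Y : (forall c, X c <= Y c) -> Ex p X <= Ex p Y.
Proof. by move=> leXY; apply: ler_sum => c _; rewrite ler_wpM2l ?coin_prob_ge0. Qed.

Lemma Ex_ge0 X : (forall c, 0 <= X c) -> 0 <= Ex p X.
Proof. by move=> X_ge0; rewrite -(Ex_cst 0); apply: ler_Ex. Qed.

Lemma ExD X Y : Ex p (fun c => X c + Y c) = Ex p X + Ex p Y.
Proof. by rewrite /Ex -big_split; apply: eq_bigr => c _; rewrite mulrDr. Qed.

Lemma ExZ k X : Ex p (fun c => k * X c) = k * Ex p X.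
Proof. by rewrite /Ex mulr_sumr; apply: eq_bigr => c _; rewrite mulrCA. Qed.

Definition set_coin c l b : {ffun V -> bool} := [ffun x => if x == l then b else c x].

Lemma set_coin_at c l b : set_coin c l b l = b.
Proof. by rewrite ffunE eqxx. Qed.

Lemma set_coinK c l b b' : set_coin (set_coin c l b) l b' = set_coin c l b'.
Proof. by apply/ffunP => x; rewrite !ffunE; case: eqP. Qed.

Lemma set_coin_id c l : set_coin c l (c l) = c.
Proof. by apply/ffunP => x; rewrite !ffunE; case: eqP => // ->. Qed.

Lemma set_coin_eq c l : c l -> set_coin c l true = c.
Proof. by move=> <-; rewrite set_coin_id. Qed.

Definition coin_prob_off l c := \prod_(x | x != l) (if c x then p else 1 - p).

Lemma coin_prob_off_set l c b : coin_prob_off l (set_coin c l b) = coin_prob_off l c.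
Proof. by apply: eq_bigr => x /negPf xl; rewrite ffunE xl. Qed.

Lemma coin_probE l c : coin_prob p c = (if c l then p else 1 - p) * coin_prob_off l c.
Proof. by rewrite /coin_prob (bigD1 l). Qed.

Lemma sum_flip_coin l (F : {ffun V -> bool} -> R) :
  \sum_(c : {ffun V -> bool} | ~~ c l) F c =
  \sum_(c : {ffun V -> bool} | c l) F (set_coin c l false).
Proof.
pose flip c := set_coin c l (~~ c l).
have flipK : involutive flip.
  by move=> c; rewrite /flip set_coinK set_coin_at negbK set_coin_id.
rewrite (reindex_inj (inv_inj flipK)) /=.
by apply: eq_big => c; rewrite /flip set_coin_at ?negbK // => ->.
Qed.

Lemma Ex_set_coin l b X :
  Ex p (fun c => X (set_coin c l b)) =
  \sum_(c : {ffun V -> bool} | c l) coin_prob_off l c * X (set_coin c l b).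
Proof.
rewrite /Ex (bigID (fun c => c l)) /= sum_flip_coin -big_split /=.
apply: eq_bigr => c cl; rewrite set_coinK -mulrDl !(coin_probE l) set_coin_at cl.
by rewrite coin_prob_off_set -mulrDl addrC subrK mul1r.
Qed.

Lemma Ex_split_coin l X : Ex p X =
  p * Ex p (fun c => X (set_coin c l true)) + (1 - p) * Ex p (fun c => X (set_coin c l false)).
Proof.
rewrite !Ex_set_coin /Ex (bigID (fun c => c l)) /= sum_flip_coin !mulr_sumr.
congr (_ + _); apply: eq_bigr => c cl.
  by rewrite (coin_probE l) cl set_coin_eq // mulrA.
by rewrite (coin_probE l) set_coin_at coin_prob_off_set mulrA.
Qed.

End CoinExpectation.

Section Edges.
Variables (V1 V2 : finType).
Local Notation T := (V1 * V2)%type.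
Implicit Types (M N A B : {set T}) (e x : T) (r : V2).

Definition unique_right N : {set T} :=
  [set x in N | [forall x' in N, (x'.2 == x.2) ==> (x' == x)]].

Definition covered M r := [exists m in M, m.2 == r].

Lemma unique_right_sub N : unique_right N \subset N.
Proof. by apply/subsetP => x; rewrite inE => /andP[]. Qed.

Lemma unique_right0 : unique_right set0 = set0.
Proof. by apply/setP => x; rewrite !inE. Qed.

Lemma covered0 r : covered set0 r = false.
Proof. by apply/negbTE/existsP => -[m]; rewrite in_set0. Qed.

Lemma coveredU1 M e r : covered (e |: M) r = (e.2 == r) || covered M r.
Proof.
apply/existsP/orP => [[m /andP[]]|[er|/existsP[m /andP[mM mr]]]].
- rewrite in_setU1 => /orP[/eqP-> ->|mM mr]; first by left.
  by right; apply/existsP; exists m; rewrite mM.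
- by exists e; rewrite setU11.
- by exists m; rewrite (setU1r _ mM).
Qed.

Lemma unique_rightU1_other N e x : e \notin N -> x.2 != e.2 ->
  (x \in unique_right (e |: N)) = (x \in unique_right N).
Proof.
move=> eN x2; have xe : x != e by apply: contraNneq x2 => ->.
rewrite !inE (negbTE xe) /=; congr (_ && _).
apply: eq_forallb => y; rewrite !inE; case: (eqVneq y e) => [->|_] //=.
by rewrite (negbTE eN) /= eq_sym (negbTE x2).
Qed.

Lemma unique_rightU1_same N e x : x != e -> x.2 == e.2 -> x \notin unique_right (e |: N).
Proof.
move=> xe x2; rewrite inE; apply/negP => /andP[_ /forall_inP uniq_x].
by have := uniq_x e (setU11 _ _); rewrite eq_sym x2 eq_sym (negbTE xe).
Qed.

Lemma unique_rightU1_new N e : e \notin N ->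
  (e \in unique_right (e |: N)) = ~~ covered N e.2.
Proof.
move=> eN; rewrite /covered inE setU11 /=.
apply/forall_inP/negP => [uniq_e /existsP[n /andP[nN /eqP n2]]|].
  by have := uniq_e n (setU1r _ nN); rewrite n2 eqxx => /eqP ne; move: eN; rewrite -ne nN.
move=> no_n y; rewrite in_setU1 => /orP[/eqP->|yN]; first exact/implyP.
by apply/implyP => y2; case: no_n; apply/existsP; exists y; rewrite yN.
Qed.

Lemma is_matching_sub A B : A \subset B -> is_matching B -> is_matching A.
Proof.
move=> AB /forall_inP mB; apply/forall_inP => e1 e1A; apply/forall_inP => e2 e2A.
by have /forall_inP := mB e1 (subsetP AB _ e1A); apply; apply: (subsetP AB).
Qed.

Lemma is_matchingU1_uncovered M e : is_matching (e |: M) -> e \notin M -> ~~ covered M e.2.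
Proof.
move=> /forall_inP match_eM eM; apply/existsP => -[m /andP[mM /eqP me]].
have /forall_inP/(_ e (setU11 _ _)) := match_eM m (setU1r _ mM).
by rewrite me eqxx andbF implybF negbK => /eqP mE; rewrite -mE mM in eM.
Qed.

End Edges.

Section Greedy.
Variables (R : realFieldType) (V1 V2 : finType) (E : {set V1 * V2})
  (f : {set V1 * V2} -> R) (rank : V1 * V2 -> nat) (p : R).
Hypothesis f_ge0 : forall A : {set V1 * V2}, A \subset E -> 0 <= f A.
Hypothesis f_mono : forall A B : {set V1 * V2}, A \subset B -> B \subset E -> f A <= f B.
Hypothesis f_submod : forall A B : {set V1 * V2}, A \subset E -> B \subset E ->
  f (A :|: B) + f (A :&: B) <= f A + f B.
Hypotheses (p_ge0 : 0 <= p) (p_le1 : p <= 1).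

Local Notation T := (V1 * V2)%type.
Local Notation gain := (gain f).
Implicit Types (M N W A B X : {set T}) (w h : {ffun T -> R}) (x e a : T) (c : {ffun V1 -> bool}).

Lemma gain_ge0 A x : A \subset E -> x \in E -> 0 <= gain A x.
Proof.
move=> AE xE; rewrite /gain subr_ge0 f_mono ?subsetUr //.
by rewrite subUset sub1set xE.
Qed.

Lemma le_gain A B x : A \subset B -> B \subset E -> x \in E -> gain B x <= gain A x.
Proof.
move=> AB BE xE; have AE := subset_trans AB BE.
have [xB|xB] := boolP (x \in B).
  by rewrite /gain (setUidPr _) ?sub1set // subrr gain_ge0.
have xAB : (x |: A) :&: B = A.
  apply/setP => y; rewrite !inE; case: (eqVneq y x) => [->|_] /=.
    by rewrite (negbTE xB); apply/esym/negP => /(subsetP AB); apply/negP.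
  by apply: andb_idr => /(subsetP AB).
have := f_submod (A := x |: A) (B := B); rewrite xAB -setUA (setUidPr AB).
by rewrite subUset sub1set xE AE /gain => /(_ isT BE); lra.
Qed.

Lemma is_choice_spec M N W w e : is_choice f rank (M, N, W, w) e ->
  [/\ e \in W, is_matching (e |: M) &
      forall x, x \in candidates (M, N, W, w) -> gain M x <= gain M e].
Proof.
rewrite /is_choice /candidates inE => /andP[/andP[eW em] /forall_inP e_max]; split => //.
by move=> x /e_max /orP[/ltW //|/andP[/eqP -> _]].
Qed.

Definition drop_left W e := [set x in W | x.1 != e.1].
Definition set_weight M w e : {ffun T -> R} := [ffun x => if x == e then gain M e else w x].
Definition set_ghost M N h e : {ffun T -> R} :=
  [ffun x => if x == e then gain (M :|: N) e else h x].

Definition ghost_update (st : state R V1 V2) h : {ffun T -> R} :=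
  let: (M, N, W, w) := st in
  if [pick e | is_choice f rank (M, N, W, w) e] is Some e then set_ghost M N h e else h.

Definition ghost_step c (sh : state R V1 V2 * {ffun T -> R}) :=
  (step f rank c sh.1, ghost_update sh.1 sh.2).

Lemma iter_ghost_step n c sh : (iter n (ghost_step c) sh).1 = iter n (step f rank c) sh.1.
Proof. by elim: n => //= n ->. Qed.

Record greedy_inv M N W w h : Prop := {
  inv_M : M \subset E;
  inv_N : N \subset E;
  inv_W : W \subset E;
  inv_left : forall x a, x \in W -> a \in M :|: N -> x.1 != a.1;
  inv_greedy : forall a x, a \in N -> x \in candidates (M, N, W, w) -> gain M x <= w a;
  inv_ge0 : forall a, a \in N -> 0 <= w a /\ 0 <= h a;
  inv_ghost : forall X, X \subset M :|: N -> \sum_(x in X) h x <= f X - f set0 }.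

Lemma greedy_inv0 : greedy_inv set0 set0 E [ffun => 0] [ffun => 0].
Proof.
split; rewrite ?sub0set //.
- by move=> x a _; rewrite setU0 in_set0.
- by move=> a x; rewrite in_set0.
- by move=> a; rewrite in_set0.
by move=> X; rewrite setU0 subset0 => /eqP ->; rewrite big_set0 subrr.
Qed.

Lemma drop_left_sub W e : drop_left W e \subset W.
Proof. by apply/subsetP => x; rewrite inE => /andP[]. Qed.

Lemma candidates_drop_left M N W w M' N' w' e x : M \subset M' ->
  x \in candidates (M', N', drop_left W e, w') -> x \in candidates (M, N, W, w).
Proof.
move=> MM'; rewrite !inE => /andP[/andP[xW _] xM']; rewrite xW.
by apply: is_matching_sub xM'; apply: setUS.
Qed.

Definition ghost_value M N h :=
  \sum_(x in unique_right N) (if covered M x.2 then h x else p * h x).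
Definition weight_S N w := \sum_(x in unique_right N) w x.
Definition open_max M N w := \sum_(r : V2)
  (if covered M r then 0 else \big[Order.max/0]_(x | (x \in N) && (x.2 == r)) w x).
Definition gain_N M N := f (M :|: N) - f M.

Definition potential M N w h := ghost_value M N h - p * (1 - p) * gain_N M N
  - (1 - p) ^+ 2 * open_max M N w - (p - (1 - p)) * weight_S N w.

Let average_id (a : R) : p * a + (1 - p) * a - a = 0.
Proof. ring. Qed.

Section Chosen.
Variables (M N W : {set T}) (w h : {ffun T -> R}) (e : T).
Hypothesis invMN : greedy_inv M N W w h.
Hypothesis e_choice : is_choice f rank (M, N, W, w) e.

Lemma chosen_in_W : e \in W. Proof. by case: (is_choice_spec e_choice). Qed.

Lemma chosen_in_E : e \in E. Proof. exact: subsetP (inv_W invMN) _ chosen_in_W. Qed.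

Lemma chosen_matching : is_matching (e |: M). Proof. by case: (is_choice_spec e_choice). Qed.

Lemma chosen_notin_MN : e \notin M :|: N.
Proof. by apply/negP => /(inv_left invMN chosen_in_W); rewrite eqxx. Qed.

Lemma chosen_notin_M : e \notin M.
Proof. by apply: contra chosen_notin_MN; rewrite inE => ->. Qed.

Lemma chosen_notin_N : e \notin N.
Proof. by apply: contra chosen_notin_MN; rewrite inE orbC => ->. Qed.

Lemma chosen_candidate : e \in candidates (M, N, W, w).
Proof. by rewrite inE chosen_in_W chosen_matching. Qed.

Lemma ghost_step_bound X : X \subset e |: (M :|: N) ->
  \sum_(x in X) set_ghost M N h e x <= f X - f set0.
Proof.
move=> XS; have MNE : M :|: N \subset E by rewrite subUset (inv_M invMN) (inv_N invMN).
have [eX|eX] := boolP (e \in X); last first.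
  have XMN : X \subset M :|: N.
    apply/subsetP => y yX; move: (subsetP XS y yX).
    by rewrite in_setU1; case: eqP => // ye; rewrite -ye yX in eX.
  rewrite (eq_bigr h) ?(inv_ghost invMN) // => y yX.
  by rewrite ffunE; case: eqP => // ye; rewrite -ye yX in eX.
rewrite (bigD1 e) //= ffunE eqxx.
have XD : X :\ e \subset M :|: N.
  apply/subsetP => y; rewrite in_setD1 => /andP[ye yX].
  by move: (subsetP XS y yX); rewrite in_setU1 (negbTE ye).
have -> : \sum_(i in X | i != e) set_ghost M N h e i = \sum_(i in X :\ e) h i.
  apply: eq_big => y; first by rewrite !inE andbC.
  by rewrite ffunE => /andP[_ /negbTE ->].
have le_gainX : gain (M :|: N) e <= gain (X :\ e) e by apply: le_gain; rewrite ?chosen_in_E.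
move: le_gainX (inv_ghost invMN XD); rewrite /gain setD1K //; lra.
Qed.

Lemma chosen_neq a : a \in N -> a != e.
Proof. by move=> aN; apply: contraNneq chosen_notin_N => <-. Qed.

Lemma set_weight_N a : a \in N -> set_weight M w e a = w a.
Proof. by move=> /chosen_neq /negbTE ae; rewrite ffunE ae. Qed.

Lemma set_ghost_N a : a \in N -> set_ghost M N h e a = h a.
Proof. by move=> /chosen_neq /negbTE ae; rewrite ffunE ae. Qed.

Lemma drop_left_E : drop_left W e \subset E.
Proof. exact: subset_trans (drop_left_sub W e) (inv_W invMN). Qed.

Lemma drop_left_fresh x a : x \in drop_left W e -> a \in e |: (M :|: N) -> x.1 != a.1.
Proof.
rewrite inE => /andP[xW xe]; rewrite in_setU1 => /orP[/eqP-> //|].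
by move=> aMN; apply: (inv_left invMN xW aMN).
Qed.

Lemma greedy_inv_heads :
  greedy_inv (e |: M) N (drop_left W e) (set_weight M w e) (set_ghost M N h e).
Proof.
split.
- by rewrite subUset sub1set chosen_in_E (inv_M invMN).
- exact: inv_N invMN.
- exact: drop_left_E.
- by move=> x a xW; rewrite -setUA; apply: drop_left_fresh.
- move=> a x aN x_cand.
  have xc : x \in candidates (M, N, W, w) by apply: candidates_drop_left x_cand; apply: subsetUr.
  have xE : x \in E by move: xc; rewrite inE => /andP[/(subsetP (inv_W invMN))].
  rewrite set_weight_N //; apply: le_trans (inv_greedy invMN aN xc).
  by apply: le_gain; rewrite ?subsetUr // subUset sub1set chosen_in_E (inv_M invMN).
- by move=> a aN; rewrite set_weight_N ?set_ghost_N //; exact: (inv_ge0 invMN aN).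
- by move=> X; rewrite -setUA; apply: ghost_step_bound.
Qed.

Lemma greedy_inv_tails :
  greedy_inv M (e |: N) (drop_left W e) (set_weight M w e) (set_ghost M N h e).
Proof.
have [_ _ e_max] := is_choice_spec e_choice.
split.
- exact: inv_M invMN.
- by rewrite subUset sub1set chosen_in_E (inv_N invMN).
- exact: drop_left_E.
- by move=> x a xW; rewrite setUCA; apply: drop_left_fresh.
- move=> a x aN x_cand.
  have xc : x \in candidates (M, N, W, w) by apply: candidates_drop_left x_cand.
  move: aN; rewrite in_setU1 => /orP[/eqP->|aN]; first by rewrite ffunE eqxx e_max.
  by rewrite set_weight_N // (inv_greedy invMN aN xc).
- move=> a; rewrite in_setU1 => /orP[/eqP->|aN]; last first.
    by rewrite set_weight_N ?set_ghost_N //; exact: (inv_ge0 invMN aN).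
  have MNE : M :|: N \subset E by rewrite subUset (inv_M invMN) (inv_N invMN).
  by rewrite !ffunE eqxx !gain_ge0 ?chosen_in_E ?(inv_M invMN).
- by move=> X; rewrite setUCA; apply: ghost_step_bound.
Qed.

Let eN := chosen_notin_N.
Let e_uncovered : covered M e.2 = false.
Proof. exact/negbTE/(is_matchingU1_uncovered chosen_matching chosen_notin_M). Qed.

Let e_notin_S : (e \in unique_right N) = false.
Proof. by apply/negbTE; apply: contra eN; apply: (subsetP (unique_right_sub N)). Qed.

Let wv := gain M e.
Let hv := gain (M :|: N) e.

Lemma ghost_value_step :
  p * ghost_value (e |: M) N (set_ghost M N h e)
  + (1 - p) * ghost_value M (e |: N) (set_ghost M N h e) - ghost_value M N h
  = if covered N e.2 then 0 else p * (1 - p) * hv.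
Proof.
rewrite /ghost_value [X in p * X]big_mkcond [X in (1 - p) * X]big_mkcond [X in _ - X]big_mkcond /=.
rewrite !mulr_sumr -big_split -sumrB /= (bigD1 e) //= big1 ?addr0.
  rewrite !ffunE eqxx e_notin_S unique_rightU1_new // e_uncovered.
  case: (covered N e.2); rewrite /hv /=; first by rewrite !mulr0 addr0 subr0.
  ring.
move=> x xe; rewrite !ffunE (negbTE xe) coveredU1 (eq_sym e.2); case: eqVneq => [x2|x2] /=.
  rewrite (negbTE (unique_rightU1_same N xe (introT eqP x2))) x2 e_uncovered.
  by case: (x \in unique_right N); ring.
by rewrite unique_rightU1_other // average_id.
Qed.

Lemma weight_S_step :
  p * weight_S N (set_weight M w e) + (1 - p) * weight_S (e |: N) (set_weight M w e)
  - weight_S N w <= if covered N e.2 then 0 else (1 - p) * wv.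
Proof.
rewrite /weight_S [X in p * X]big_mkcond [X in (1 - p) * X]big_mkcond [X in _ - X]big_mkcond /=.
rewrite !mulr_sumr -big_split -sumrB /= (bigD1 e) //= -[X in _ <= X]addr0.
apply: lerD.
  rewrite !ffunE eqxx e_notin_S unique_rightU1_new //.
  by case: (covered N e.2); rewrite /= ?mulr0 ?addr0 ?add0r ?subr0 ?oppr0.
apply: sumr_le0 => x xe; rewrite !ffunE (negbTE xe).
have [x2|x2] := eqVneq x.2 e.2; last by rewrite unique_rightU1_other // average_id.
rewrite (negbTE (unique_rightU1_same N xe (introT eqP x2))) mulr0 addr0.
case: ifP => [/(subsetP (unique_right_sub N)) xN | _]; last by rewrite !mulr0 subr0.
have := (inv_ge0 invMN xN).1; have := p_le1; nra.
Qed.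

Lemma open_max_step :
  p * open_max (e |: M) N (set_weight M w e) + (1 - p) * open_max M (e |: N) (set_weight M w e)
  - open_max M N w <= if covered N e.2 then - (p * wv) else (1 - p) * wv.
Proof.
have wv_ge0 : 0 <= wv by apply: gain_ge0 (inv_M invMN) chosen_in_E.
rewrite /open_max !mulr_sumr -big_split -sumrB /= (bigD1 e.2) //= big1 ?addr0.
  rewrite coveredU1 eqxx e_uncovered /=.
  set m := \big[Order.max/0]_(x | (x \in N) && (x.2 == e.2)) w x.
  set m' := \big[Order.max/0]_(x | (x \in e |: N) && (x.2 == e.2)) set_weight M w e x.
  have m_ge0 : 0 <= m by apply: bigmax_ge_id.
  have [/existsP[n /andP[nN n2]]|no_n] := boolP (covered N e.2); last first.
    have m'_le : m' <= wv.
      apply: bigmax_le => // x /andP[]; rewrite in_setU1 => /orP[/eqP->|xN] x2.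
        by rewrite ffunE eqxx.
      by case/negP: no_n; apply/existsP; exists x; rewrite xN x2.
    have : 0 <= (1 - p) * (wv - m') by rewrite mulr_ge0 ?subr_ge0.
    lra.
  have wv_le : wv <= w n := inv_greedy invMN nN chosen_candidate.
  have wn_le : w n <= m by apply: le_bigmax_cond; rewrite nN.
  have m'_le : m' <= m.
    apply: bigmax_le => // x /andP[]; rewrite in_setU1 => /orP[/eqP->|xN] x2.
      by rewrite ffunE eqxx; apply: le_trans wn_le.
    by rewrite set_weight_N //; apply: le_bigmax_cond; rewrite xN.
  have : 0 <= (1 - p) * (m - m') by rewrite mulr_ge0 ?subr_ge0.
  have : 0 <= p * (m - wv) by rewrite mulr_ge0 ?subr_ge0 //; apply: le_trans wn_le.
  lra.
move=> r re; have er : (e.2 == r) = false by rewrite eq_sym (negbTE re).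
rewrite coveredU1 er /= (eq_bigr w) => [|x /andP[xN _]]; last first.
  by rewrite set_weight_N.
have -> : \big[Order.max/0]_(x | (x \in e |: N) && (x.2 == r)) set_weight M w e x =
          \big[Order.max/0]_(x | (x \in N) && (x.2 == r)) w x.
  apply: eq_big => [x|x /andP[_ x2]].
    by rewrite in_setU1; case: (eqVneq x e) => [->|] //=; rewrite (negbTE eN) er.
  by rewrite ffunE; case: eqP => // xe; rewrite xe er in x2.
exact: average_id.
Qed.

Lemma gain_N_step :
  p * gain_N (e |: M) N + (1 - p) * gain_N M (e |: N) - gain_N M N = hv - p * wv.
Proof. by rewrite /gain_N -setUA [M :|: (e |: N)]setUCA /hv /wv /gain; ring. Qed.

Lemma potential_step : 1 - p <= p ->
  potential M N w h <= p * potential (e |: M) N (set_weight M w e) (set_ghost M N h e)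
    + (1 - p) * potential M (e |: N) (set_weight M w e) (set_ghost M N h e).
Proof.
move=> hp; have q_ge0 : 0 <= 1 - p by rewrite subr_ge0.
have MNE : M :|: N \subset E by rewrite subUset (inv_M invMN) (inv_N invMN).
have hv_le : hv <= wv by apply: le_gain (subsetUl _ _) MNE chosen_in_E.
have wv_ge0 : 0 <= wv by apply: gain_ge0 (inv_M invMN) chosen_in_E.
move: ghost_value_step weight_S_step open_max_step gain_N_step.
rewrite /potential.
set X1 := ghost_value (e |: M) _ _; set X2 := ghost_value M (e |: N) _; set X := ghost_value M N h.
set Y1 := weight_S N _; set Y2 := weight_S (e |: N) _; set Y := weight_S N w.
set O1 := open_max (e |: M) N _; set O2 := open_max M (e |: N) _; set O := open_max M N w.
set Z1 := gain_N (e |: M) N; set Z2 := gain_N M (e |: N); set Z := gain_N M N.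
move=> dX dY dV dZ.
have pq_dZ : p * (1 - p) * (p * Z1 + (1 - p) * Z2 - Z) = p * (1 - p) * (hv - p * wv).
  by rewrite dZ.
case: (covered N e.2) in dX dY dV.
  have : 0 <= (1 - p) ^+ 2 * (- (p * wv) - (p * O1 + (1 - p) * O2 - O)).
    by rewrite mulr_ge0 ?sqr_ge0 ?subr_ge0.
  have : 0 <= (p - (1 - p)) * (0 - (p * Y1 + (1 - p) * Y2 - Y)) by rewrite mulr_ge0 ?subr_ge0.
  have : 0 <= p * (1 - p) * (wv - hv) by rewrite !mulr_ge0 ?subr_ge0.
  lra.
have : 0 <= (1 - p) ^+ 2 * ((1 - p) * wv - (p * O1 + (1 - p) * O2 - O)).
  by rewrite mulr_ge0 ?sqr_ge0 ?subr_ge0.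
have : 0 <= (p - (1 - p)) * ((1 - p) * wv - (p * Y1 + (1 - p) * Y2 - Y)).
  by rewrite mulr_ge0 ?subr_ge0.
lra.
Qed.
End Chosen.

Definition ghost_inv (sh : state R V1 V2 * {ffun T -> R}) : Prop :=
  let: (M, N, W, w, h) := sh in greedy_inv M N W w h.

Lemma pick_choice st e : [pick e | is_choice f rank st e] = Some e -> is_choice f rank st e.
Proof. by case: pickP => // e' e'_choice [<-]. Qed.

Lemma ghost_step_chosen c M N W w h e :
  [pick e | is_choice f rank (M, N, W, w) e] = Some e ->
  ghost_step c (M, N, W, w, h) =
  if c e.1 then (e |: M, N, drop_left W e, set_weight M w e, set_ghost M N h e)
  else (M, e |: N, drop_left W e, set_weight M w e, set_ghost M N h e).
Proof. by rewrite /ghost_step /= /step => ->; case: (c e.1). Qed.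

Lemma ghost_step_stuck c M N W w h :
  [pick e | is_choice f rank (M, N, W, w) e] = None ->
  ghost_step c (M, N, W, w, h) = (M, N, W, w, h).
Proof. by rewrite /ghost_step /= /step => ->. Qed.

Lemma ghost_step_inv c sh : ghost_inv sh -> ghost_inv (ghost_step c sh).
Proof.
case: sh => [[[[M N] W] w] h] invMN.
case pick_e: [pick e | is_choice f rank (M, N, W, w) e] => [e|]; last by rewrite ghost_step_stuck.
have e_choice := pick_choice pick_e.
rewrite (ghost_step_chosen _ _ pick_e); case: (c e.1).
  exact: greedy_inv_heads invMN e_choice.
exact: greedy_inv_tails invMN e_choice.
Qed.

Lemma iter_ghost_step_inv n c sh : ghost_inv sh -> ghost_inv (iter n (ghost_step c) sh).
Proof. by elim: n => //= n IHn /IHn; apply: ghost_step_inv. Qed.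

Lemma step_coin_local c c' M N W w : {in W, forall x, c x.1 = c' x.1} ->
  step f rank c (M, N, W, w) = step f rank c' (M, N, W, w).
Proof.
move=> cc'; rewrite /step; case: pickP => [e /is_choice_spec[eW _ _]|_] //.
by rewrite cc'.
Qed.

Lemma step_W_sub c M N W w : (step f rank c (M, N, W, w)).1.2 \subset W.
Proof.
rewrite /step; case: pickP => [e _|_] //=.
by case: (c e.1); apply: drop_left_sub.
Qed.

Lemma iter_ghost_step_coin_local n c c' (sh : state R V1 V2 * {ffun T -> R}) :
  {in sh.1.1.2, forall x, c x.1 = c' x.1} ->
  iter n (ghost_step c) sh = iter n (ghost_step c') sh.
Proof.
elim: n sh => // n IHn [[[[M N] W] w] h] cc'; rewrite /= in cc'.
have step_cc' : ghost_step c (M, N, W, w, h) = ghost_step c' (M, N, W, w, h).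
  by rewrite /ghost_step (step_coin_local M N w cc').
rewrite !iterSr step_cc'; apply: IHn => x xW; apply: cc'.
exact: subsetP (step_W_sub c' M N W w) x xW.
Qed.

(* The coin of [e.1] is never read again: no edge left in [drop_left W e]
   touches [e.1]. *)
Lemma iter_ghost_step_set_coin n c b M N W w h e :
  [pick e | is_choice f rank (M, N, W, w) e] = Some e ->
  iter n.+1 (ghost_step (set_coin c e.1 b)) (M, N, W, w, h) =
  iter n (ghost_step c)
    (if b then (e |: M, N, drop_left W e, set_weight M w e, set_ghost M N h e)
     else (M, e |: N, drop_left W e, set_weight M w e, set_ghost M N h e)).
Proof.
move=> pick_e; rewrite iterSr (ghost_step_chosen _ _ pick_e) set_coin_at.
apply: iter_ghost_step_coin_local => x; case: b; rewrite inE => /andP[_ /negbTE xe];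
  by rewrite ffunE xe.
Qed.

Definition ghost_potential (sh : state R V1 V2 * {ffun T -> R}) : R :=
  let: (M, N, W, w, h) := sh in potential M N w h.

Lemma potential_le_Ex n M N W w h : 1 - p <= p -> greedy_inv M N W w h ->
  potential M N w h <= Ex p (fun c => ghost_potential (iter n (ghost_step c) (M, N, W, w, h))).
Proof.
move=> hp; elim: n M N W w h => [|n IHn] M N W w h invMN; first by rewrite Ex_cst.
case pick_e: [pick e | is_choice f rank (M, N, W, w) e] => [e|]; last first.
  under eq_Ex => c do rewrite iterSr ghost_step_stuck //.
  exact: IHn.
have e_choice := pick_choice pick_e.
rewrite (Ex_split_coin _ e.1).
under eq_Ex => c do rewrite (iter_ghost_step_set_coin _ _ _ _ pick_e).
under [X in _ + _ * X]eq_Ex => c do rewrite (iter_ghost_step_set_coin _ _ _ _ pick_e).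
apply: le_trans (potential_step invMN e_choice hp) _.
apply: lerD; apply: ler_wpM2l; rewrite ?subr_ge0 //; apply: IHn.
  exact: greedy_inv_heads invMN e_choice.
exact: greedy_inv_tails invMN e_choice.
Qed.

Lemma potential_le_final M N W w h : greedy_inv M N W w h ->
  potential M N w h <= f (unique_right N) - (p - (1 - p)) * weight_S N w.
Proof.
move=> invMN; have q_ge0 : 0 <= 1 - p by rewrite subr_ge0.
have SN := unique_right_sub N.
have ghost_le : ghost_value M N h <= \sum_(x in unique_right N) h x.
  apply: ler_sum => x /(subsetP SN) /(inv_ge0 invMN) [_ h_ge0].
  by case: (covered M x.2); rewrite ?ler_piMl.
have ghost_f := inv_ghost invMN (subset_trans SN (subsetUr M N)).
have f0 : 0 <= f set0 by apply: f_ge0; apply: sub0set.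
have : 0 <= p * (1 - p) * gain_N M N.
  rewrite !mulr_ge0 // subr_ge0 f_mono ?subsetUl //.
  by rewrite subUset (inv_M invMN) (inv_N invMN).
have : 0 <= (1 - p) ^+ 2 * open_max M N w.
  rewrite mulr_ge0 ?sqr_ge0 // sumr_ge0 // => r _.
  by case: (covered M r) => //; apply: bigmax_ge_id.
rewrite /potential; lra.
Qed.

Lemma potential0 : potential set0 set0 [ffun => 0] [ffun => 0] = 0.
Proof.
rewrite /potential /ghost_value /weight_S /open_max /gain_N unique_right0 !big_set0 setU0 subrr.
rewrite big1 => [|r _]; last by rewrite covered0 big_pred0 // => x; rewrite in_set0.
by rewrite !mulr0 !subr0.
Qed.

Definition ghost_run c := iter #|E| (ghost_step c) (set0, set0, E, [ffun => 0], [ffun => 0]).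

Lemma ghost_run_fst c : (ghost_run c).1 = run f rank E c.
Proof. exact: iter_ghost_step. Qed.

Lemma ghost_run_inv c : ghost_inv (ghost_run c).
Proof. exact/iter_ghost_step_inv/greedy_inv0. Qed.

Lemma potential_run_le c : ghost_potential (ghost_run c) <=
  f (sim_S f rank E c) - (p - (1 - p)) * \sum_(e in sim_S f rank E c) sim_w f rank E c e.
Proof.
rewrite /sim_S /sim_N /sim_w -ghost_run_fst.
by case: (ghost_run c) (ghost_run_inv c) => [[[[M N] W] w] h] /= /potential_le_final.
Qed.

Lemma sim_f_S_ge0 c : 0 <= f (sim_S f rank E c).
Proof.
rewrite /sim_S /sim_N -ghost_run_fst.
case: (ghost_run c) (ghost_run_inv c) => [[[[M N] W] w] h] /= invMN.
exact/f_ge0/(subset_trans (unique_right_sub N) (inv_N invMN)).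
Qed.

Lemma sim_weight_S_ge0 c : 0 <= \sum_(e in sim_S f rank E c) sim_w f rank E c e.
Proof.
rewrite /sim_S /sim_N /sim_w -ghost_run_fst.
case: (ghost_run c) (ghost_run_inv c) => [[[[M N] W] w] h] /= invMN.
by apply: sumr_ge0 => x /(subsetP (unique_right_sub N)) /(inv_ge0 invMN) [].
Qed.

Lemma Ex_f_S_ge : 1 - p <= p ->
  (p - (1 - p)) * Ex p (fun c => \sum_(e in sim_S f rank E c) sim_w f rank E c e)
  <= Ex p (fun c => f (sim_S f rank E c)).
Proof.
move=> hp; have := potential_le_Ex #|E| hp greedy_inv0; rewrite potential0 => Ex_pot_ge0.
have := le_trans Ex_pot_ge0 (ler_Ex p_ge0 p_le1 potential_run_le).
under eq_Ex => c do rewrite -mulNr.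
by rewrite ExD ExZ mulNr subr_ge0.
Qed.
End Greedy.

Lemma invr_theta (R : realFieldType) (p t : R) : 0 < p -> p < 1 -> 0 < t ->
  ((t + p / (1 - p)) / (p / (1 - p)))^-1 = p / (t * (1 - p) + p).
Proof.
move=> p_gt0 p_lt1 t_gt0; have q_gt0 : 0 < 1 - p by rewrite subr_gt0.
have d_gt0 : 0 < t * (1 - p) + p by rewrite ltr_wpDl // mulr_ge0 // ltW.
by field; rewrite !gt_eqF.
Qed.

Lemma ler_divBV (R : realFieldType) (a b c d : R) : 0 < b -> 0 < d ->
  (a / b - d^-1 <= c) = (a * d - b <= c * b * d).
Proof.
move=> b_gt0 d_gt0; have -> : a / b - d^-1 = (a * d - b) / (b * d).
  by field; rewrite !gt_eqF.
by rewrite ler_pdivrMr ?mulr_gt0 // mulrA.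
Qed.

Lemma coef_le0 (R : realFieldType) (p t : R) : 0 < p -> p <= 1 - p -> 0 < t ->
  p / (t * (1 - p) + p) - (t * p ^+ 2)^-1 <= 0.
Proof.
move=> p_gt0 hp t_gt0; rewrite ler_divBV ?mulr_gt0 ?exprn_gt0 //; last first.
  by rewrite ltr_wpDl // mulr_ge0 //; lra.
have p3 : p * p ^+ 2 <= p by rewrite ler_piMr ?exprn_ile1 //; lra.
have : p * (t * p ^+ 2) <= t * (1 - p) by rewrite mulrCA ler_pM2l //; lra.
by rewrite !mul0r; lra.
Qed.

Lemma coef_le_bias (R : realFieldType) (p t : R) : 1 - p <= p -> p < 1 -> 0 < t ->
  p / (t * (1 - p) + p) - (t * p ^+ 2)^-1 <= p - (1 - p).
Proof.
move=> hp p_lt1 t_gt0; have p_gt0 : 0 < p by lra.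
have d_gt0 : 0 < t * (1 - p) + p by rewrite ltr_wpDl // mulr_ge0 //; lra.
rewrite ler_divBV ?mulr_gt0 ?exprn_gt0 //.
(* Clearing denominators leaves [A t^2 + B t + p >= 0]; for [B < 0] it follows
   from the discriminant bound [B^2 <= 4 A p]. *)
set A := (2 * p - 1) * (1 - p) * p ^+ 2; set B := (1 - p) * (1 - 2 * p ^+ 3).
suff : 0 <= A * t ^+ 2 + B * t + p.
  have -> : A * t ^+ 2 + B * t + p = (p - (1 - p)) * (t * (1 - p) + p) * (t * p ^+ 2)
                                   - (p * (t * p ^+ 2) - (t * (1 - p) + p)).
    by rewrite /A /B; ring.
  by rewrite subr_ge0.
have A_ge0 : 0 <= A by rewrite /A !mulr_ge0 ?sqr_ge0 //; lra.
have At_ge0 : 0 <= A * t ^+ 2 by rewrite mulr_ge0 ?sqr_ge0.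
have [B_ge0|B_lt0] := lerP 0 B.
  have : 0 <= B * t by rewrite mulr_ge0 // ltW.
  lra.
have p3_le : p ^+ 3 <= p by rewrite exprS ler_piMr ?exprn_ile1 //; lra.
have p3_gt : 1 < 2 * p ^+ 3 by move: B_lt0; rewrite /B pmulr_rlt0; lra.
have u_gt0 : 0 < 2 * p ^+ 3 - 1 by lra.
have A_gt0 : 0 < A.
  by rewrite /A; apply: mulr_gt0; [apply: mulr_gt0 | apply: exprn_gt0]; lra.
have disc : B ^+ 2 <= 4 * A * p.
  set u := 2 * p ^+ 3 - 1 in u_gt0 *.
  have -> : B ^+ 2 = (1 - p) ^+ 2 * u ^+ 2 by rewrite /B /u; ring.
  have -> : 4 * A * p = 2 * (1 - p) * (2 * p - 1) * (u + 1) by rewrite /A /u; ring.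
  have q2 : (1 - p) ^+ 2 <= 1 - p by rewrite expr2 ler_piMr //; lra.
  have u2 : u ^+ 2 <= u * (2 * p - 1) by rewrite expr2 ler_pM2l /u //; lra.
  nra.
have : 0 <= 4 * A * (A * t ^+ 2 + B * t + p).
  have -> : 4 * A * (A * t ^+ 2 + B * t + p) = (2 * A * t + B) ^+ 2 + (4 * A * p - B ^+ 2).
    by ring.
  by rewrite addr_ge0 ?sqr_ge0 ?subr_ge0.
by rewrite pmulr_rge0 // mulr_gt0.
Qed.

Theorem lemma11 (R : realFieldType) (V1 V2 : finType) (E : {set V1 * V2})
  (f : {set V1 * V2} -> R) (rank : V1 * V2 -> nat) (p t : R) :
  (forall A : {set V1 * V2}, A \subset E -> 0 <= f A) ->
  (forall A B : {set V1 * V2}, A \subset B -> B \subset E -> f A <= f B) ->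
  (forall A B : {set V1 * V2}, A \subset E -> B \subset E -> f (A :|: B) + f (A :&: B) <= f A + f B) ->
  injective rank ->
  0 < p -> p < 1 -> 0 < t ->
  let alpha := p / (1 - p) in
  let theta := (t + alpha) / alpha in
  Ex p (fun c => f (sim_S f rank E c)) >=
  (theta^-1 - (t * p ^+ 2)^-1) *
    Ex p (fun c => \sum_(e in sim_S f rank E c) sim_w f rank E c e).
Proof.
move=> f_ge0 f_mono f_submod _ p_gt0 p_lt1 t_gt0 /=; rewrite invr_theta //.
have [p_ge0 p_le1] : 0 <= p /\ p <= 1 by rewrite !ltW.
have Ew_ge0 := Ex_ge0 p_ge0 p_le1 (sim_weight_S_ge0 rank f_mono f_submod).
have [hp|hp] := lerP p (1 - p).
  apply: le_trans (Ex_ge0 p_ge0 p_le1 (sim_f_S_ge0 rank f_ge0 f_mono f_submod)).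
  by rewrite mulr_le0_ge0 // coef_le0.
apply: le_trans (Ex_f_S_ge rank f_ge0 f_mono f_submod p_ge0 p_le1 (ltW hp)).
by apply: ler_wpM2r => //; apply: coef_le_bias => //; apply: ltW.
Qed.
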